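(* Let $n\ge 1$, $\lambda\in\mathbb{R}$, $t\ge 0$, and let $E_1,\dots,E_{n+1}$ and $k_1,\dots,k_n$ be complex numbers. Assume that $E_{p(j)}-E_j+i\lambda k(j;G)\neq 0$ for every $G\in\mathcal{G}_n$ and every $1\le j\le n$ (notation as in the context). Then $$\int_{0\le t_n\le\cdots\le t_1\le t} dt_1\cdots dt_n\,\prod_{j=1}^n e^{-it_j(E_{j+1}-E_j+i\lambda k_j)} =\sum_{G\in\mathcal{G}_n}\sigma(G)\left(\prod_{j=1}^n\frac{i}{E_{p(j)}-E_j+i\lambda k(j;G)}\right)\left(e^{-it\,(E_{p(1)}-E_1+i\lambda k(1;G))}-1\right),$$ where $p(j)=p_G(j)$.
   Context: $\mathcal{G}_n$ is the set of directed graphs $G$ on the vertex set $\{1,\dots,n+1\}$ that are in bijection with compositions of $n$ (finite ordered sequences $(c_1,\dots,c_r)$ of positive integers with $c_1+\dots+c_r=n$) as follows. Given a composition with partial sums $s_0=0<s_1<\dots<s_r=n$, every vertex $j$ with $s_{i-1}<j\le s_i$ receives exactly one bond, coming from the vertex $p(j):=s_i+1$; no other bonds are present. Hence $|\mathcal{G}_n|=2^{n-1}$. The sign of $G$ is $\sigma(G)=(-1)^{r-1}$, where $r$ is the number of parts of the composition. Equivalently, the signs are defined inductively: the unique graph in $\mathcal{G}_1$ has sign $+1$; from $G$ one obtains a graph with one more vertex either by adding a new block of size one at the start (sign flips) or by enlarging the first block by one (sign unchanged). For $1\le j\le n$, set $k(j;G)=\sum_{m=j}^{p(j)-1}k_m$.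 *)

From Stdlib Require Import Reals List Arith Lia FinFun.
From Coquelicot Require Import Coquelicot.
Import ListNotations.
Open Scope R_scope.

Definition cexp (z : C) : C :=
  (exp (fst z) * cos (snd z), exp (fst z) * sin (snd z)).


Definition Csum (l : list C) : C := fold_right Cplus (RtoC 0) l.
Definition Cprod (l : list C) : C := fold_right Cmult (RtoC 1) l.

Definition is_composition (n : nat) (c : list nat) : Prop :=
  List.Forall (fun a => (0 < a)%nat) c /\ list_sum c = n.

Fixpoint comps_aux (fuel n : nat) : list (list nat) :=
  match fuel with
  | O => match n with O => [[]] | _ => [] end
  | S f =>
      match n with
      | O => [[]]
      | _ => flat_map (fun a => map (cons a) (comps_aux f (n - a)))
                      (seq 1 n)
      end
  end.

Definition compositions (n : nat) : list (list nat) := comps_aux n n.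

(* p(j) for the graph G associated with the composition c:
   if s_{i-1} < j <= s_i then p(j) = s_i + 1.  [off] is the running partial sum. *)
Fixpoint p_aux (off : nat) (c : list nat) (j : nat) : nat :=
  match c with
  | [] => O
  | a :: c' => if (j <=? off + a)%nat then (off + a + 1)%nat else p_aux (off + a) c' j
  end.

Definition pG (c : list nat) (j : nat) : nat := p_aux 0 c j.

Definition sigmaG (c : list nat) : C := RtoC ((-1) ^ (length c - 1)).

Definition kG (k : nat -> C) (c : list nat) (j : nat) : C :=
  Csum (map k (seq j (pG c j - j))).

(* simplex_int fs s = int_{0 <= t_m <= ... <= t_1 <= s} prod_j fs_j(t_j),
   computed as the iterated (Riemann) integral
   int_0^s f_1(t_1) int_0^{t_1} f_2(t_2) ... int_0^{t_{m-1}} f_m(t_m). *)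
Fixpoint simplex_int (fs : list (R -> C)) (s : R) : C :=
  match fs with
  | [] => RtoC 1
  | f :: fs' =>
      @RInt C_R_CompleteNormedModule (fun u => Cmult (f u) (simplex_int fs' u)) 0 s
  end.

Lemma is_composition_nil_iff c : is_composition 0 c <-> c = [].
Proof.
  split.
  - intros [Hp Hs]. destruct c as [|a c]; [reflexivity|].
    inversion Hp; subst. simpl in Hs. lia.
  - intros ->. split; [constructor|reflexivity].
Qed.

Lemma comps_aux_spec f : forall n c, (n <= f)%nat ->
  (In c (comps_aux f n) <-> is_composition n c).
Proof.
  induction f as [|f IH]; intros n c Hn.
  - assert (n = 0%nat) by lia; subst. simpl.
    rewrite is_composition_nil_iff. split; [intros [H|[]]; auto | intros; left; auto].
  - destruct n as [|m].
    + simpl. rewrite is_composition_nil_iff. split; [intros [H|[]]; auto | intros; left; auto].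
    + cbn [comps_aux]. rewrite in_flat_map. split.
      * intros [a [Ha Hc]]. apply in_seq in Ha. apply in_map_iff in Hc.
        destruct Hc as [c' [<- Hc']]. apply IH in Hc'; [|lia].
        destruct Hc' as [Hp Hs]. split; [constructor; [lia|exact Hp]|]. simpl. lia.
      * intros [Hp Hs]. destruct c as [|a c']; [simpl in Hs; lia|].
        inversion Hp; subst. exists a. split; [apply in_seq; simpl in *; lia|].
        apply in_map_iff. exists c'. split; [reflexivity|]. simpl in Hs.
        assert (Ha : (0 < a)%nat) by assumption.
        apply IH; [lia|]. split; [assumption|]. lia.
Qed.

Lemma compositions_spec n c : In c (compositions n) <-> is_composition n c.
Proof. apply comps_aux_spec. lia. Qed.

Lemma NoDup_flat_map_cons (l : list nat) (g : nat -> list (list nat)) :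
  NoDup l -> (forall a, NoDup (g a)) ->
  NoDup (flat_map (fun a => map (cons a) (g a)) l).
Proof.
  induction 1 as [|a l Hnin Hnd IH]; intros Hg; simpl; [constructor|].
  apply NoDup_app.
  - apply FinFun.Injective_map_NoDup; [intros x y H; inversion H; auto | apply Hg].
  - apply IH, Hg.
  - intros x Hx1 Hx2. apply in_map_iff in Hx1. destruct Hx1 as [y [<- _]].
    apply in_flat_map in Hx2. destruct Hx2 as [b [Hb Hy]].
    apply in_map_iff in Hy. destruct Hy as [z [Hz _]]. inversion Hz; subst. auto.
Qed.

Lemma comps_aux_NoDup f : forall n, NoDup (comps_aux f n).
Proof.
  induction f as [|f IH]; intros n.
  - destruct n; repeat constructor; auto.
  - destruct n as [|m]; [repeat constructor; auto|].
    cbn [comps_aux]. apply NoDup_flat_map_cons; [apply seq_NoDup | intros; apply IH].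
Qed.

Lemma compositions_NoDup n : NoDup (compositions n).
Proof. apply comps_aux_NoDup. Qed.

From Stdlib Require Import Reals List Lia.
From Coquelicot Require Import Coquelicot.
Import ListNotations.
Open Scope R_scope.

(* Write a_j = E_{j+1} - E_j + i lambda k_j.  Peeling off the outermost variable, the
   simplex integral is the integral over [0, t] of e^{-i u a_1} times the same integral
   I'(u) for the vertices 2, ..., n+1.  By induction I'(u) is a sum over graphs G' of
   w(G') (e^{-i u D'} - 1), D' the denominator of the first vertex of G', and
     int_0^t e^{-i u a_1} w (e^{-i u D'} - 1) du
       = w i/(a_1 + D') (e^{-i t (a_1 + D')} - 1) - w i/a_1 (e^{-i t a_1} - 1).
   The first summand is the term of G' with its first block enlarged to contain
   vertex 1 (its first denominator telescopes to a_1 + D'); the second is the term of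
   the graph with a new singleton block {1} in front, whose sign is flipped.  Applied
   to G_{n-1}, these two operations produce every graph of G_n exactly once.  The induction
   runs over graphs whose vertices are shifted by an offset. *)

Lemma is_derive_C_components (f : R -> C) (x : R) (l : C) :
  is_derive (fun u => fst (f u)) x (fst l) ->
  is_derive (fun u => snd (f u)) x (snd l) ->
  @is_derive R_AbsRing C_R_NormedModule f x l.
Proof.
  intros H1 H2.
  pose proof (@filterdiff_comp'_2 R_AbsRing R_NormedModule R_NormedModule R_NormedModule
     (prod_NormedModule R_AbsRing R_NormedModule R_NormedModule)
     (fun u => fst (f u)) (fun u => snd (f u)) pair x
     (fun y => scal y (fst l)) (fun y => scal y (snd l)) pair H1 H2) as Hpair.
  unfold is_derive.
  apply filterdiff_ext with (fun y => (fst (f y), snd (f y))).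
  { intros y. destruct (f y); reflexivity. }
  apply filterdiff_ext_lin with (fun y => (scal y (fst l), scal y (snd l))).
  2: { intros y. destruct l; reflexivity. }
  apply Hpair.
  apply filterdiff_ext_lin with (fun p => p).
  - apply filterdiff_ext with (fun p => p); [intros [a b]; reflexivity | apply filterdiff_id].
  - intros [a b]; reflexivity.
Qed.

Lemma cexp_plus (z w : C) : cexp (Cplus z w) = Cmult (cexp z) (cexp w).
Proof.
  destruct z as [a b], w as [c d]. unfold cexp, Cplus, Cmult; simpl.
  rewrite exp_plus, cos_plus, sin_plus. f_equal; ring.
Qed.

Definition phase (D : C) (u : R) : C :=
  cexp (Cmult (Cmult (RtoC (- 1)) Ci) (Cmult (RtoC u) D)).

Lemma phase_plus (D1 D2 : C) (u : R) :
  Cmult (phase D1 u) (phase D2 u) = phase (Cplus D1 D2) u.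
Proof. unfold phase. rewrite <- cexp_plus. f_equal. ring. Qed.

Lemma phase_0 (D : C) : phase D 0 = RtoC 1.
Proof.
  unfold phase. replace (Cmult (Cmult (RtoC (- 1)) Ci) (Cmult (RtoC 0) D)) with (RtoC 0) by ring.
  unfold cexp, RtoC; simpl. rewrite exp_0, cos_0, sin_0. f_equal; ring.
Qed.

Lemma phase_components (d1 d2 u : R) :
  phase (d1, d2) u = (exp (u * d2) * cos (- (u * d1)), exp (u * d2) * sin (- (u * d1))).
Proof.
  unfold phase, cexp, Cmult, RtoC, Ci; simpl.
  replace ((-1 * 0 - 0 * 1) * (u * d1 - 0 * d2) - (-1 * 1 + 0 * 0) * (u * d2 + 0 * d1))
    with (u * d2) by ring.
  replace ((-1 * 0 - 0 * 1) * (u * d2 + 0 * d1) + (-1 * 1 + 0 * 0) * (u * d1 - 0 * d2))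
    with (- (u * d1)) by ring.
  reflexivity.
Qed.

Lemma is_derive_scaled_phase (c D : C) (x : R) :
  @is_derive R_AbsRing C_R_NormedModule (fun u => Cmult c (phase D u)) x
    (Cmult (Cmult c (Cmult (Cmult (RtoC (- 1)) Ci) D)) (phase D x)).
Proof.
  destruct c as [c1 c2], D as [d1 d2].
  apply is_derive_C_components;
    (eapply is_derive_ext; [intros u; cbv beta; rewrite phase_components; reflexivity|]);
    rewrite phase_components; unfold Cmult, RtoC, Ci; simpl;
    auto_derive; auto; ring.
Qed.

Lemma is_RInt_scaled_phase (c D : C) (t : R) : D <> RtoC 0 ->
  @is_RInt C_R_NormedModule (fun u => Cmult c (phase D u)) 0 t
    (Cmult (Cmult c (Cdiv Ci D)) (Cminus (phase D t) (RtoC 1))).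
Proof.
  intros HD.
  set (F := fun u => Cmult (Cmult c (Cdiv Ci D)) (phase D u)).
  replace (Cmult (Cmult c (Cdiv Ci D)) (Cminus (phase D t) (RtoC 1)))
    with (@minus C_R_NormedModule (F t) (F 0)).
  2: { unfold F. rewrite phase_0. change (@minus C_R_NormedModule ?a ?b) with (Cminus a b).
    match goal with |- ?x = ?y => change (@eq C x y) end. ring. }
  apply (@is_RInt_derive C_R_CompleteNormedModule).
  - intros x _. unfold F.
    replace (Cmult c (phase D x))
      with (Cmult (Cmult (Cmult c (Cdiv Ci D)) (Cmult (Cmult (RtoC (- 1)) Ci) D)) (phase D x)).
    + apply is_derive_scaled_phase.
    + assert (Hi : Cmult Ci Ci = Copp (RtoC 1))
        by (unfold Ci, Cmult, Copp, RtoC; simpl; f_equal; ring).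
      assert (Hm : RtoC (- 1) = Copp (RtoC 1)) by (unfold Copp, RtoC; simpl; f_equal; ring).
      rewrite Hm. transitivity (Cmult (Cmult c (Copp (Cmult Ci Ci))) (phase D x)).
      * field. exact HD.
      * rewrite Hi. ring.
  - intros y _. apply (@ex_derive_continuous R_AbsRing C_R_NormedModule).
    eexists. apply is_derive_scaled_phase.
Qed.

Lemma Csum_app (l1 l2 : list C) : Csum (l1 ++ l2) = Cplus (Csum l1) (Csum l2).
Proof. induction l1 as [|x l1 IH]; simpl; [|rewrite IH]; ring. Qed.

Lemma Csum_map_plus {A} (f h : A -> C) (l : list A) :
  Csum (map (fun x => Cplus (f x) (h x)) l) = Cplus (Csum (map f l)) (Csum (map h l)).
Proof. induction l as [|x l IH]; simpl; [|rewrite IH]; ring. Qed.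

Lemma Cmult_Csum_map {A} (z : C) (f : A -> C) (l : list A) :
  Cmult z (Csum (map f l)) = Csum (map (fun x => Cmult z (f x)) l).
Proof. induction l as [|x l IH]; simpl; [|rewrite <- IH]; ring. Qed.

Lemma is_RInt_Csum {A} (h : A -> R -> C) (v : A -> C) (l : list A) (a b : R) :
  (forall x, In x l -> @is_RInt C_R_NormedModule (h x) a b (v x)) ->
  @is_RInt C_R_NormedModule (fun u => Csum (map (fun x => h x u) l)) a b (Csum (map v l)).
Proof.
  induction l as [|x l IH]; intros H; simpl.
  - pose proof (@is_RInt_const C_R_NormedModule a b zero) as Hc.
    rewrite (@scal_zero_r R_Ring C_R_ModuleSpace) in Hc. exact Hc.
  - apply (@is_RInt_plus C_R_NormedModule).
    + apply H. left; reflexivity.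
    + apply IH. intros y Hy. apply H. right; exact Hy.
Qed.

Lemma comps_aux_fuel (f1 f2 n : nat) : (n <= f1)%nat -> (n <= f2)%nat ->
  comps_aux f1 n = comps_aux f2 n.
Proof.
  revert f2 n. induction f1 as [|f1 IH]; intros f2 n H1 H2.
  - assert (n = 0%nat) by lia; subst. destruct f2; reflexivity.
  - destruct n as [|m]; [destruct f2; reflexivity|].
    destruct f2 as [|f2]; [lia|].
    cbn [comps_aux]. rewrite !flat_map_concat_map. f_equal.
    apply map_ext_in. intros a Ha. apply in_seq in Ha.
    f_equal. apply IH; lia.
Qed.

Lemma comps_aux_S (f m : nat) : comps_aux (S f) (S m) =
  flat_map (fun a => map (cons a) (comps_aux f (S m - a))) (seq 1 (S m)).
Proof. reflexivity. Qed.

Definition enlarge_first (c : list nat) : list nat :=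
  match c with [] => [] | a :: c' => S a :: c' end.

Lemma compositions_S (n : nat) : (1 <= n)%nat ->
  compositions (S n) =
  map (cons 1%nat) (compositions n) ++ map enlarge_first (compositions n).
Proof.
  intros Hn. destruct n as [|m]; [lia|].
  unfold compositions. rewrite !comps_aux_S.
  change (seq 1 (S (S m))) with (1%nat :: seq 2 (S m)).
  cbn [flat_map]. replace (S (S m) - 1)%nat with (S m) by lia.
  f_equal.
  rewrite <- seq_shift, !flat_map_concat_map, concat_map, !map_map. f_equal.
  apply map_ext_in. intros b Hb. apply in_seq in Hb.
  rewrite map_map. cbn [enlarge_first].
  replace (S (S m) - S b)%nat with (S m - b)%nat by lia.
  rewrite (comps_aux_fuel (S m) m) by lia.
  reflexivity.
Qed.

Lemma Csum_compositions_S (f : list nat -> C) (n : nat) : (1 <= n)%nat ->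
  Csum (map f (compositions (S n))) =
  Csum (map (fun c => Cplus (f (1%nat :: c)) (f (enlarge_first c))) (compositions n)).
Proof.
  intros Hn. rewrite compositions_S by exact Hn.
  rewrite map_app, Csum_app, !map_map, Csum_map_plus. reflexivity.
Qed.

Lemma is_composition_cons1 (n : nat) (c : list nat) :
  is_composition n c -> is_composition (S n) (1%nat :: c).
Proof. intros [Hpos Hsum]. split; [constructor; [lia | exact Hpos] | simpl; lia]. Qed.

Lemma is_composition_enlarge (n : nat) (c : list nat) : (1 <= n)%nat ->
  is_composition n c -> is_composition (S n) (enlarge_first c).
Proof.
  intros Hn [Hpos Hsum]. destruct c as [|b c]; [simpl in Hsum; lia|].
  inversion Hpos; subst. split; [constructor; [lia | assumption] | simpl; lia].
Qed.

Lemma is_composition_head (n : nat) (c : list nat) : (1 <= n)%nat ->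
  is_composition n c -> exists b c', c = b :: c' /\ (1 <= b)%nat.
Proof.
  intros Hn [Hpos Hsum]. destruct c as [|b c]; [simpl in Hsum; lia|].
  inversion Hpos; subst. exists b, c. auto.
Qed.

Lemma sigmaG_cons1 (c : list nat) : c <> [] -> sigmaG (1%nat :: c) = Copp (sigmaG c).
Proof.
  intros Hc. destruct c as [|x c]; [congruence|]. unfold sigmaG. cbn [length].
  replace (S (S (length c)) - 1)%nat with (S (length c)) by lia.
  replace (S (length c) - 1)%nat with (length c) by lia.
  unfold RtoC, Copp; simpl. f_equal; ring.
Qed.

Lemma sigmaG_enlarge (c : list nat) : sigmaG (enlarge_first c) = sigmaG c.
Proof. destruct c; reflexivity. Qed.

Lemma simplex_int_cons (f : R -> C) (fs : list (R -> C)) (s : R) :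
  simplex_int (f :: fs) s =
  @RInt C_R_CompleteNormedModule (fun u => Cmult (f u) (simplex_int fs u)) 0 s.
Proof. reflexivity. Qed.

Section ShiftedGraphs.

Variables (E k : nat -> C) (lambda : R).

Definition gap (j : nat) : C :=
  Cplus (Cminus (E (S j)) (E j)) (Cmult Ci (Cmult (RtoC lambda) (k j))).

(* The denominator of vertex [j] in the graph of [c] with all vertices shifted by
   [off]; [denom 0] is the [D] of the theorem. *)
Definition denom (off : nat) (c : list nat) (j : nat) : C :=
  Cplus (Cminus (E (p_aux off c j)) (E j))
    (Cmult Ci (Cmult (RtoC lambda) (Csum (map k (seq j (p_aux off c j - j)))))).

Definition weight (off n : nat) (c : list nat) : C :=
  Cmult (sigmaG c) (Cprod (map (fun j => Cdiv Ci (denom off c j)) (seq (S off) n))).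

Definition term (off n : nat) (t : R) (c : list nat) : C :=
  Cmult (weight off n c) (Cminus (phase (denom off c (S off)) t) (RtoC 1)).

Definition nonresonant (off n : nat) : Prop :=
  forall c, is_composition n c -> forall j, (S off <= j <= off + n)%nat ->
    denom off c j <> RtoC 0.

Lemma denom_cons1 (off : nat) (c : list nat) (j : nat) : (S off < j)%nat ->
  denom off (1%nat :: c) j = denom (S off) c j.
Proof.
  intros Hj. unfold denom. cbn [p_aux].
  destruct (Nat.leb_spec j (off + 1)); [lia|].
  rewrite Nat.add_1_r. reflexivity.
Qed.

Lemma denom_cons1_first (off : nat) (c : list nat) :
  denom off (1%nat :: c) (S off) = gap (S off).
Proof.
  unfold denom, gap. cbn [p_aux].
  destruct (Nat.leb_spec (S off) (off + 1)); [|lia].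
  replace (off + 1 + 1)%nat with (S (S off)) by lia.
  replace (S (S off) - S off)%nat with 1%nat by lia.
  cbn [seq map Csum fold_right]. f_equal. f_equal. f_equal. ring.
Qed.

Lemma denom_enlarge (off : nat) (c : list nat) (j : nat) :
  denom off (enlarge_first c) j = denom (S off) c j.
Proof.
  destruct c as [|b c]; [reflexivity|].
  unfold denom. cbn [enlarge_first p_aux]. rewrite Nat.add_succ_r. reflexivity.
Qed.

(* [p_aux] also sends the vertex [off] just before the first block to the end of that
   block, so its denominator telescopes into one more [gap]. *)
Lemma denom_split_first (off b : nat) (c : list nat) : (1 <= b)%nat ->
  denom off (b :: c) off = Cplus (gap off) (denom off (b :: c) (S off)).
Proof.
  intros Hb. unfold denom, gap. cbn [p_aux].
  destruct (Nat.leb_spec off (off + b)); [|lia].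
  destruct (Nat.leb_spec (S off) (off + b)); [|lia].
  replace (off + b + 1 - off)%nat with (S (off + b + 1 - S off)) by lia.
  cbn [seq map Csum fold_right].
  fold (Csum (map k (seq (S off) (off + b + 1 - S off)))). ring.
Qed.

Lemma term_cons1 (off n : nat) (t : R) (c : list nat) : c <> [] ->
  term off (S n) t (1%nat :: c) =
  Cmult (Copp (weight (S off) n c))
    (Cmult (Cdiv Ci (gap (S off))) (Cminus (phase (gap (S off)) t) (RtoC 1))).
Proof.
  intros Hc. unfold term, weight.
  rewrite sigmaG_cons1 by exact Hc.
  cbn [seq map Cprod fold_right].
  rewrite denom_cons1_first.
  rewrite (map_ext_in _ (fun j => Cdiv Ci (denom (S off) c j))).
  2: { intros j Hj. apply in_seq in Hj. rewrite denom_cons1 by lia. reflexivity. }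
  fold (Cprod (map (fun j => Cdiv Ci (denom (S off) c j)) (seq (S (S off)) n))).
  ring.
Qed.

Lemma term_enlarge (off n : nat) (t : R) (b : nat) (c : list nat) : (1 <= b)%nat ->
  let D := Cplus (gap (S off)) (denom (S off) (b :: c) (S (S off))) in
  term off (S n) t (enlarge_first (b :: c)) =
  Cmult (weight (S off) n (b :: c)) (Cmult (Cdiv Ci D) (Cminus (phase D t) (RtoC 1))).
Proof.
  intros Hb D. unfold term, weight, D.
  rewrite sigmaG_enlarge, denom_enlarge.
  rewrite (map_ext _ (fun j => Cdiv Ci (denom (S off) (b :: c) j)))
    by (intros j; rewrite denom_enlarge; reflexivity).
  cbn [seq map Cprod fold_right].
  fold (Cprod (map (fun j => Cdiv Ci (denom (S off) (b :: c) j)) (seq (S (S off)) n))).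
  rewrite denom_split_first by exact Hb.
  ring.
Qed.

Lemma is_RInt_phase_term (off n : nat) (t : R) (b : nat) (c : list nat) :
  (1 <= b)%nat -> gap (S off) <> RtoC 0 ->
  Cplus (gap (S off)) (denom (S off) (b :: c) (S (S off))) <> RtoC 0 ->
  @is_RInt C_R_NormedModule (fun u => Cmult (phase (gap (S off)) u) (term (S off) n u (b :: c)))
    0 t (Cplus (term off (S n) t (1%nat :: b :: c)) (term off (S n) t (enlarge_first (b :: c)))).
Proof.
  intros Hb Ha HD.
  rewrite term_cons1 by discriminate. rewrite term_enlarge by exact Hb. cbv zeta.
  set (w := weight (S off) n (b :: c)).
  set (a := gap (S off)) in *. set (D := Cplus a (denom (S off) (b :: c) (S (S off)))) in *.
  apply (@is_RInt_ext C_R_NormedModule (fun u => Cminus (Cmult w (phase D u)) (Cmult w (phase a u)))).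
  { intros u _. unfold term. fold w. unfold D. rewrite <- phase_plus.
    match goal with |- ?x = ?y => change (@eq C x y) end. ring. }
  replace (Cplus _ _) with (Cminus (Cmult (Cmult w (Cdiv Ci D)) (Cminus (phase D t) (RtoC 1)))
                                   (Cmult (Cmult w (Cdiv Ci a)) (Cminus (phase a t) (RtoC 1))))
    by ring.
  apply (@is_RInt_minus C_R_NormedModule); apply is_RInt_scaled_phase; assumption.
Qed.

Lemma nonresonant_shift (off n : nat) : nonresonant off (S n) -> nonresonant (S off) n.
Proof.
  intros H c Hc j Hj. rewrite <- denom_cons1 by lia.
  apply H; [apply is_composition_cons1; exact Hc | lia].
Qed.

Lemma nonresonant_first_denoms (off n b : nat) (c : list nat) : (1 <= n)%nat ->
  nonresonant off (S n) -> is_composition n (b :: c) ->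
  gap (S off) <> RtoC 0 /\ Cplus (gap (S off)) (denom (S off) (b :: c) (S (S off))) <> RtoC 0.
Proof.
  intros Hn H Hc. assert (Hb : (1 <= b)%nat) by (destruct Hc as [Hpos _]; inversion Hpos; lia).
  split.
  - rewrite <- (denom_cons1_first off (b :: c)).
    apply H; [apply is_composition_cons1; exact Hc | lia].
  - rewrite <- denom_split_first, <- denom_enlarge by exact Hb.
    apply H; [apply is_composition_enlarge; assumption | lia].
Qed.

Lemma simplex_int_phases (n off : nat) (t : R) : nonresonant off (S n) ->
  simplex_int (map (fun j => phase (gap j)) (seq (S off) (S n))) t =
  Csum (map (term off (S n) t) (compositions (S n))).
Proof.
  revert off t. induction n as [|n IH]; intros off t H.
  - change (compositions 1) with [[1%nat]].
    change (seq (S off) 1) with [S off].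
    rewrite !map_cons, simplex_int_cons. cbn [map simplex_int Csum fold_right].
    apply (@is_RInt_unique C_R_CompleteNormedModule).
    apply (@is_RInt_ext C_R_NormedModule (fun u => Cmult (RtoC 1) (phase (gap (S off)) u))).
    { intros u _. match goal with |- ?x = ?y => change (@eq C x y) end. ring. }
    replace (Cplus _ _) with (Cmult (Cmult (RtoC 1) (Cdiv Ci (gap (S off))))
                                    (Cminus (phase (gap (S off)) t) (RtoC 1))).
    2: { unfold term, weight. cbn [seq map Cprod fold_right].
         rewrite denom_cons1_first. change (sigmaG [1%nat]) with (RtoC 1).
         match goal with |- ?x = ?y => change (@eq C x y) end. ring. }
    apply is_RInt_scaled_phase. rewrite <- (denom_cons1_first off []).
    apply H; [apply (is_composition_cons1 0), compositions_spec; left; reflexivity | lia].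
  - change (seq (S off) (S (S n))) with (S off :: seq (S (S off)) (S n)).
    rewrite map_cons, simplex_int_cons, Csum_compositions_S by lia.
    apply (@is_RInt_unique C_R_CompleteNormedModule).
    apply (@is_RInt_ext C_R_NormedModule
      (fun u => Csum (map (fun c => Cmult (phase (gap (S off)) u) (term (S off) (S n) u c))
                          (compositions (S n))))).
    { intros u _. rewrite IH by (apply nonresonant_shift; exact H).
      rewrite Cmult_Csum_map. reflexivity. }
    apply is_RInt_Csum. intros c Hc. apply compositions_spec in Hc.
    destruct (is_composition_head (S n) c) as [b [c' [-> Hb]]]; [lia | exact Hc |].
    destruct (nonresonant_first_denoms off (S n) b c') as [Ha HD]; [lia | exact H | exact Hc |].
    apply is_RInt_phase_term; assumption.
Qed.

End ShiftedGraphs.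

Theorem mainTheorem1 (n : nat) (lambda t : R) (E k : nat -> C) :
  (1 <= n)%nat -> 0 <= t ->
  (forall c : list nat, is_composition n c ->
     forall j : nat, (1 <= j <= n)%nat ->
       Cplus (Cminus (E (pG c j)) (E j)) (Cmult Ci (Cmult (RtoC lambda) (kG k c j)))
         <> RtoC 0) ->
  simplex_int
    (map (fun j : nat => fun tj : R =>
            cexp (Cmult (Cmult (RtoC (- 1)) Ci) (Cmult (RtoC tj)
              (Cplus (Cminus (E (S j)) (E j)) (Cmult Ci (Cmult (RtoC lambda) (k j)))))))
       (seq 1 n)) t
  =
  Csum (map (fun c : list nat =>
     let D := fun j : nat =>
       Cplus (Cminus (E (pG c j)) (E j)) (Cmult Ci (Cmult (RtoC lambda) (kG k c j))) in
     Cmult (sigmaG c)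
       (Cmult (Cprod (map (fun j : nat => Cdiv Ci (D j)) (seq 1 n)))
          (Cminus (cexp (Cmult (Cmult (RtoC (- 1)) Ci) (Cmult (RtoC t) (D 1%nat)))) (RtoC 1))))
     (compositions n)).
Proof.
  intros Hn _ Hnonres. destruct n as [|m]; [lia|].
  etransitivity; [exact (simplex_int_phases E k lambda m 0 t Hnonres) |].
  f_equal. apply map_ext. intros c. symmetry. apply Cmult_assoc.
Qed.
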